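(* Let $\alpha\in\mathbb{R}$ with $\alpha\neq0$, $\beta\ge0$, $0<\mu\le1$, and define $h(\lambda)=\frac{\lambda(\lambda+\beta)^\mu}{(\lambda+\beta)^\mu+\alpha}$ for $\lambda\in\mathbb{C}$ with $\operatorname{Re}(\lambda)>0$. Assume either (a) $\alpha>0$, or (b) $\alpha<0$ and $\alpha+\beta^\mu\ge|\alpha|$. Then $|\arg(h(\lambda))|\le(1+\mu)|\arg(\lambda)|$ for all $\lambda$ with $\operatorname{Re}(\lambda)>0$.
   Context: Complex powers $z^\mu$ and arguments are taken with the principal branch. *)

From Stdlib Require Import Reals.
From Coquelicot Require Import Coquelicot.
Open Scope R_scope.

(* Principal argument Arg z in (-PI, PI], with Arg 0 = 0 (atan2 convention). *)
Definition Arg (z : C) : R :=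
  let x := Re z in let y := Im z in
  if Rlt_dec 0 x then atan (y / x)
  else if Rlt_dec x 0 then
    (if Rle_dec 0 y then atan (y / x) + PI else atan (y / x) - PI)
  else if Rlt_dec 0 y then PI / 2
  else if Rlt_dec y 0 then - (PI / 2)
  else 0.

(* Principal power z^mu = exp(mu * Log z), Log z = ln|z| + i Arg z, for z <> 0;
   0^mu := 0. *)
Definition Cpow (z : C) (mu : R) : C :=
  if Ceq_dec z 0 then 0%C
  else (Rpower (Cmod z) mu * cos (mu * Arg z),
        Rpower (Cmod z) mu * sin (mu * Arg z)).

Definition h (alpha beta mu : R) (lam : C) : C :=
  (lam * Cpow (lam + RtoC beta) mu / (Cpow (lam + RtoC beta) mu + RtoC alpha))%C.

(* Real power x^mu for x >= 0, with 0^mu = 0 (mu > 0); Stdlib's Rpower 0 mu = 1. *)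
Definition rpow (x mu : R) : R := if Req_EM_T x 0 then 0 else Rpower x mu.

From Pilot Require Import Defs.
From Stdlib Require Import Reals Lra Rtrigo_facts.
From Coquelicot Require Import Coquelicot.
Open Scope R_scope.

(* Write (lam + beta)^mu = r e^{is} with s = mu Arg (lam + beta); then
   h lam = r lam / v with v = r + alpha e^{-is}.  For Re lam > 0 adding beta
   can only shrink the argument, so |s| <= mu |Arg lam| < PI/2.  Both (a) and
   (b) give r + alpha cos s >= |alpha| cos s (in case (b) because
   r >= beta^mu >= 2|alpha| and cos s <= 1), which puts v in the right half
   plane with |tan (Arg v)| <= |tan s|.  Hence Arg (h lam) = Arg lam - Arg v
   with |Arg v| <= |s|, and the bound follows from the triangle inequality. *)

Definition polar (r t : R) : C := (r * cos t, r * sin t).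

Lemma atan_le x y : x <= y -> atan x <= atan y.
Proof. intros [Hlt | ->]; [left; apply atan_increasing |]; lra. Qed.

Lemma Rabs_atan u : Rabs (atan u) = atan (Rabs u).
Proof.
  destruct (Rle_lt_dec 0 u) as [Hu | Hu].
  - rewrite !Rabs_right; [reflexivity | lra |].
    rewrite <- atan_0. apply Rle_ge, atan_le. exact Hu.
  - rewrite !Rabs_left, atan_opp; [reflexivity | lra |].
    rewrite <- atan_0. apply atan_increasing. exact Hu.
Qed.

Lemma C_neq0_right_half z : 0 < Re z -> z <> 0%C.
Proof. intros Hz ->. simpl in Hz. lra. Qed.

Lemma Arg_right_half z : 0 < Re z -> Arg z = atan (Im z / Re z).
Proof. intros Hz. unfold Arg. destruct (Rlt_dec 0 (Re z)); [reflexivity | lra]. Qed.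

Lemma Arg_right_half_bound z : 0 < Re z -> Rabs (Arg z) < PI / 2.
Proof.
  intros Hz. rewrite Arg_right_half by exact Hz.
  pose proof (atan_bound (Im z / Re z)). apply Rabs_def1; lra.
Qed.

Lemma Cpolar_right_half z : 0 < Re z -> z = polar (Cmod z) (Arg z).
Proof.
  intros Hz. rewrite Arg_right_half by exact Hz.
  destruct z as [x y]. simpl in *. unfold polar.
  rewrite cos_atan, sin_atan.
  assert (Hmod : Cmod (x, y) = x * sqrt (1 + (y / x)²)).
  { unfold Cmod; simpl.
    replace (x * (x * 1) + y * (y * 1)) with ((x * x) * (1 + (y / x)²))
      by (unfold Rsqr; field; lra).
    rewrite sqrt_mult_alt, sqrt_square by nra. reflexivity. }
  assert (Hsqrt : 0 < sqrt (1 + (y / x)²)) by (apply sqrt_lt_R0; unfold Rsqr; nra).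
  rewrite Hmod. f_equal; field; lra.
Qed.

Lemma Cpolar_div a b s t : 0 < b -> (polar a s / polar b t)%C = polar (a / b) (s - t).
Proof.
  intros Hb. unfold polar, Cdiv, Cmult, Cinv. simpl.
  rewrite cos_minus, sin_minus.
  pose proof (sin2_cos2 t) as Ht. unfold Rsqr in Ht.
  replace (b * cos t * (b * cos t * 1) + b * sin t * (b * sin t * 1)) with (b * b) by nra.
  f_equal; field; lra.
Qed.

Lemma Arg_polar r t : 0 < r -> - PI < t <= PI -> Arg (polar r t) = t.
Proof.
  intros Hr Ht. pose proof PI_RGT_0.
  assert (Htan : cos t <> 0 -> r * sin t / (r * cos t) = tan t)
    by (intros; unfold tan; field; lra).
  unfold Arg, polar; simpl.
  destruct (Rtotal_order t (- (PI / 2))) as [Hlo | [-> | Hhi]].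
  { assert (cos t < 0) by (rewrite <- cos_neg; apply cos_lt_0; lra).
    assert (sin t < 0) by (rewrite <- (Ropp_involutive t), sin_neg;
                            enough (0 < sin (- t)) by lra; apply sin_gt_0; lra).
    destruct (Rlt_dec 0 (r * cos t)); [nra |].
    destruct (Rlt_dec (r * cos t) 0); [| nra].
    destruct (Rle_dec 0 (r * sin t)); [nra |].
    rewrite Htan, <- tan_pi_plus, atan_tan by lra. lra. }
  { rewrite cos_neg, sin_neg, cos_PI2, sin_PI2.
    repeat destruct Rlt_dec; lra. }
  destruct (Rtotal_order t (PI / 2)) as [Hmid | [-> | Hup]].
  { assert (0 < cos t) by (apply cos_gt_0; lra).
    destruct (Rlt_dec 0 (r * cos t)); [| nra].
    rewrite Htan, atan_tan by lra. reflexivity. }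
  { rewrite cos_PI2, sin_PI2. repeat destruct Rlt_dec; lra. }
  assert (cos t < 0) by (apply cos_lt_0; lra).
  assert (0 <= sin t) by (apply sin_ge_0; lra).
  destruct (Rlt_dec 0 (r * cos t)); [nra |].
  destruct (Rlt_dec (r * cos t) 0); [| nra].
  destruct (Rle_dec 0 (r * sin t)); [| nra].
  rewrite Htan by lra.
  replace (tan t) with (tan (PI + (t - PI))) by (f_equal; ring).
  rewrite tan_pi_plus, atan_tan; [lra | lra |].
  rewrite <- cos_neg. apply Rgt_not_eq, cos_gt_0; lra.
Qed.

Lemma Arg_div_right_half u v :
  0 < Re u -> 0 < Re v -> Arg (u / v) = Arg u - Arg v.
Proof.
  intros Hu Hv.
  pose proof (Arg_right_half_bound u Hu) as Hu_bound.
  pose proof (Arg_right_half_bound v Hv) as Hv_bound.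
  pose proof (proj1 (Cmod_gt_0 u) (C_neq0_right_half u Hu)).
  pose proof (proj1 (Cmod_gt_0 v) (C_neq0_right_half v Hv)).
  rewrite (Cpolar_right_half u Hu) at 1. rewrite (Cpolar_right_half v Hv) at 1.
  rewrite Cpolar_div by lra. apply Arg_polar.
  - apply Rdiv_lt_0_compat; lra.
  - apply Rabs_def2 in Hu_bound, Hv_bound. lra.
Qed.

Lemma Arg_scal_pos r u : 0 < r -> 0 < Re u -> Arg (RtoC r * u) = Arg u.
Proof.
  intros Hr Hu. destruct u as [x y]. simpl in Hu.
  rewrite !Arg_right_half; simpl; try nra.
  f_equal. field. lra.
Qed.

Lemma Arg_add_real_le lam b :
  0 < Re lam -> 0 <= b -> Rabs (Arg (lam + RtoC b)) <= Rabs (Arg lam).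
Proof.
  intros Hlam Hb. destruct lam as [x y]. simpl in Hlam.
  rewrite !Arg_right_half; simpl; try lra.
  rewrite !Rabs_atan. apply atan_le.
  replace (y + 0) with y by ring.
  unfold Rdiv. rewrite !Rabs_mult, !Rabs_inv, (Rabs_right x), (Rabs_right (x + b)) by lra.
  apply Rmult_le_compat_l; [apply Rabs_pos |]. apply Rinv_le_contravar; lra.
Qed.

(* Coquelicot's own [Cpow] (with a [nat] exponent) shadows the one of [Defs]. *)
Lemma Cpow_polar (z : C) (mu : R) :
  z <> 0%C -> Defs.Cpow z mu = polar (Rpower (Cmod z) mu) (mu * Arg z).
Proof. intros Hz. unfold Defs.Cpow. destruct (Ceq_dec z 0); [contradiction | reflexivity]. Qed.

Lemma Cmul_div_add_polar (lam : C) r a s :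
  (RtoC r + polar a (- s))%C <> 0%C ->
  (lam * polar r s / (polar r s + RtoC a))%C
  = (RtoC r * lam / (RtoC r + polar a (- s)))%C.
Proof.
  intros Hv.
  assert (Hunit : polar 1 s <> 0%C).
  { intros E. injection E. pose proof (sin2_cos2 s). unfold Rsqr in *. nra. }
  assert (Hfactor : (polar r s + RtoC a)%C = (polar 1 s * (RtoC r + polar a (- s)))%C).
  { pose proof (sin2_cos2 s) as Hs. unfold Rsqr in Hs.
    unfold polar, RtoC, Cplus, Cmult; simpl. rewrite cos_neg, sin_neg.
    f_equal; [| ring].
    transitivity (r * cos s + a * (sin s * sin s + cos s * cos s)); [rewrite Hs |]; ring. }
  assert (Hscale : polar r s = (RtoC r * polar 1 s)%C).
  { unfold polar, RtoC, Cmult; simpl. f_equal; ring. }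
  rewrite Hfactor, Hscale. field. auto.
Qed.

Lemma Re_shift_pos r a s :
  0 < r -> 0 < cos s -> Rabs a * cos s <= r + a * cos s ->
  0 < Re (RtoC r + polar a (- s)).
Proof.
  intros Hr Hc Hdom. simpl. rewrite cos_neg.
  pose proof (Rle_abs (- a)) as Ha. rewrite Rabs_Ropp in Ha. nra.
Qed.

Lemma Arg_shift_le r a s :
  0 < r -> Rabs s < PI / 2 -> Rabs a * cos s <= r + a * cos s ->
  Rabs (Arg (RtoC r + polar a (- s))) <= Rabs s.
Proof.
  intros Hr Hs Hdom. apply Rabs_def2 in Hs as Hs'.
  assert (Hc : 0 < cos s) by (apply cos_gt_0; lra).
  pose proof (Re_shift_pos r a s Hr Hc Hdom) as Hv.
  assert (HD : 0 < r + a * cos s) by (simpl in Hv; rewrite cos_neg in Hv; exact Hv).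
  assert (Hratio : Rabs a * / (r + a * cos s) <= / cos s).
  { apply (Rmult_le_reg_r ((r + a * cos s) * cos s)); [apply Rmult_lt_0_compat; lra |].
    replace (Rabs a * / (r + a * cos s) * ((r + a * cos s) * cos s))
      with (Rabs a * cos s) by (field; lra).
    replace (/ cos s * ((r + a * cos s) * cos s)) with (r + a * cos s) by (field; lra).
    exact Hdom. }
  rewrite <- (atan_tan s) at 2 by lra.
  rewrite Arg_right_half, !Rabs_atan by exact Hv.
  apply atan_le. simpl in *. rewrite cos_neg, sin_neg in *. unfold tan, Rdiv.
  rewrite Rplus_0_l, !Rabs_mult, !Rabs_inv, Rabs_Ropp.
  rewrite (Rabs_right (cos s)), (Rabs_right (r + _)) by lra.
  rewrite (Rmult_comm (Rabs a)), Rmult_assoc.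
  apply Rmult_le_compat_l; [apply Rabs_pos | exact Hratio].
Qed.

Lemma rpow_le_Rpower b m mu : 0 <= b <= m -> 0 <= mu -> rpow b mu <= Rpower m mu.
Proof.
  intros Hb Hmu. unfold rpow.
  destruct (Req_EM_T b 0); [left; apply exp_pos |].
  apply Rle_Rpower_l; lra.
Qed.

Lemma Rabs_mul_le_shift alpha b r c :
  (0 < alpha \/ (alpha < 0 /\ alpha + b >= Rabs alpha)) ->
  0 < r -> b <= r -> 0 <= c <= 1 -> Rabs alpha * c <= r + alpha * c.
Proof.
  intros [Hpos | [Hneg Hb]] Hr Hbr Hc.
  - rewrite Rabs_right by lra. lra.
  - rewrite Rabs_left in * by lra. nra.
Qed.

Theorem lemma3p3 (alpha beta mu : R) :
  alpha <> 0 -> 0 <= beta -> 0 < mu <= 1 ->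
  (0 < alpha \/ (alpha < 0 /\ alpha + rpow beta mu >= Rabs alpha)) ->
  forall lam : C, 0 < Re lam ->
    Rabs (Arg (h alpha beta mu lam)) <= (1 + mu) * Rabs (Arg lam).
Proof.
  intros _ Hbeta Hmu Hcase lam Hlam.
  unfold h. set (z := (lam + RtoC beta)%C).
  assert (HRe : Re z = Re lam + beta) by reflexivity.
  assert (Hz : 0 < Re z) by lra.
  set (r := Rpower (Cmod z) mu). set (s := mu * Arg z).
  assert (Hr : 0 < r) by apply exp_pos.
  assert (Hs : Rabs s <= mu * Rabs (Arg lam)).
  { unfold s. rewrite Rabs_mult, Rabs_right by lra.
    apply Rmult_le_compat_l; [lra | apply Arg_add_real_le; assumption]. }
  pose proof (Arg_right_half_bound lam Hlam) as Hlam_bound.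
  assert (Hs_bound : Rabs s < PI / 2).
  { pose proof (Rmult_le_compat_r _ _ _ (Rabs_pos (Arg lam)) (proj2 Hmu)). lra. }
  assert (Hcos : 0 < cos s) by (apply cos_gt_0; apply Rabs_def2 in Hs_bound; lra).
  assert (Hdom : Rabs alpha * cos s <= r + alpha * cos s).
  { apply (Rabs_mul_le_shift alpha (rpow beta mu)); [exact Hcase | exact Hr | | ].
    - apply rpow_le_Rpower; [| lra].
      pose proof (re_le_Cmod z). pose proof (Rle_abs (Re z)). lra.
    - split; [lra | apply COS_bound]. }
  pose proof (Re_shift_pos r alpha s Hr Hcos Hdom) as Hv.
  assert (Hrlam : 0 < Re (RtoC r * lam)).
  { change (0 < r * Re lam - 0 * Im lam). nra. }
  rewrite Cpow_polar, Cmul_div_add_polar, Arg_div_right_half, Arg_scal_pos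
    by auto using C_neq0_right_half.
  fold r s.
  pose proof (Arg_shift_le r alpha s Hr Hs_bound Hdom).
  unfold Rminus. eapply Rle_trans; [apply Rabs_triang |]. rewrite Rabs_Ropp. lra.
Qed.
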